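(* Let $s>\mu_{obs}$, $\theta=sm-n$, $F\in\mathbb{R}^{p\times n}$, $L\in\mathbb{R}^{n\times m}$, and let $K_{G,s}\in\mathbb{R}^{\theta\times s(p+m)}$. Then $$K_{G,s}I_{G,s}(F)=0\quad\text{and}\quad\operatorname{rank}\big(K_{G,s}I_{C,s}(F,L)\big)=\theta$$ hold if and only if $K_{G,s}=K_2\,[\,-\mathcal{T}_{s,s}(G)\ \ I_{sm}\,]$ for some $K_2\in\mathbb{R}^{\theta\times sm}$ with $K_2\mathcal{O}_s=0$ and $\operatorname{rank}K_2=\theta$. In that case, for every solution $(u,y,r,\hat x)$ of the kernel-based model with gain $L$ on an interval containing $[k-n+1,k+s]$, the residual $r_K(k):=K_{G,s}\begin{bmatrix}u_s(k)\\ y_s(k)\end{bmatrix}$ satisfies $r_K(k)=K_2\,\bar r_s(k)$, where $\bar r_s(k)$ is the vector of the last $sm$ entries of $R_{s+n}r_{s+n}(k-n)$, and $R_{s+n}\in\mathbb{R}^{(s+n)m\times(s+n)m}$ is block lower-triangular Toeplitz with $(i,j)$ block $CA^{i-j-1}L$ ($i>j$), $I_m$ ($i=j$), $0$ ($i<j$).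
   Context: Consider the discrete-time LTI system $x(k+1)=Ax(k)+Bu(k)$, $y(k)=Cx(k)+Du(k)$ with $u\in\mathbb{R}^p$, $x\in\mathbb{R}^n$, $y\in\mathbb{R}^m$, $n\ge 1$, and $(A,B,C,D)$ a minimal (controllable and observable) realization. For a sequence $\phi$, $\phi_s(k)=[\phi(k+1)^T,\dots,\phi(k+s)^T]^T$. $\mathcal{O}_s=[C^T,(CA)^T,\dots,(CA^{s-1})^T]^T$; $\mu_{obs}$ is the smallest integer $\nu$ with $\operatorname{rank}\mathcal{O}_\nu=n$. $\mathcal{T}_{s,s}(G)\in\mathbb{R}^{sm\times sp}$ is block lower-triangular Toeplitz with $(i,j)$ block $CA^{i-j-1}B$ ($i>j$), $D$ ($i=j$), $0$ ($i<j$). For $F\in\mathbb{R}^{p\times n}$, $A_F=A+BF$, $C_F=C+DF$. Kernel-based model with gain $L$: $\hat x(k+1)=A\hat x(k)+Bu(k)+Lr(k)$, $y(k)=C\hat x(k)+Du(k)+r(k)$. Finite-sample image representation: $M_s(F)\in\mathbb{R}^{sp\times(s+n)p}$, $N_s(F)\in\mathbb{R}^{sm\times(s+n)p}$ with $(l,j)$ blocks ($l=1,\dots,s$; $j=1,\dots,s+n$) $M_{n+l-j}$, $N_{n+l-j}$, where $M_k=FA_F^{k-1}B$ ($k\ge1$), $M_0=I_p$, $M_k=0$ ($k<0$), $N_k=C_FA_F^{k-1}B$ ($k\ge1$), $N_0=D$, $N_k=0$ ($k<0$); $I_{G,s}(F)=\begin{bmatrix}M_s(F)\\ N_s(F)\end{bmatrix}$.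 For gains $F,L$: $\hat Y_s(F,L)$, $\hat X_s(F,L)$ with $(l,j)$ blocks $\hat Y_{n+l-j}$, $\hat X_{n+l-j}$, where $\hat Y_k=FA_F^{k-1}L$ ($k\ge1$), $\hat Y_k=0$ ($k\le0$), $\hat X_k=C_FA_F^{k-1}L$ ($k\ge1$), $\hat X_0=I_m$, $\hat X_k=0$ ($k<0$); $I_{C,s}(F,L)=\begin{bmatrix}\hat Y_s(F,L)\\ \hat X_s(F,L)\end{bmatrix}$. *)

From HB Require Import structures.
From mathcomp Require Import all_boot all_order all_algebra.
From mathcomp Require Import reals.
Set Implicit Arguments. Unset Strict Implicit. Unset Printing Implicit Defensive.
Import Order.TTheory GRing.Theory Num.Theory.
Local Open Scope ring_scope.

(* Block indexing: an index i : 'I_(a*r) lies in block i %/ r (0-based),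
   at position i %% r inside the block. *)
Lemma mod_ord_lt a r (i : 'I_(a * r)) : (i %% r < r)%N.
Proof.
case: r i => [|r] i; last by rewrite ltn_mod.
by case: i => i; rewrite muln0.
Qed.

Definition mod_ord a r (i : 'I_(a * r)) : 'I_r := Ordinal (mod_ord_lt i).

Section Defs.
Variable R : realType.

Definition blockmx a b r c (f : nat -> nat -> 'M[R]_(r, c)) : 'M[R]_(a * r, b * c) :=
  \matrix_(i, j) f (i %/ r)%N (j %/ c)%N (mod_ord i) (mod_ord j).

Definition stackv a r (f : nat -> 'cV[R]_r) : 'cV[R]_(a * r) :=
  \col_i f (i %/ r)%N (mod_ord i) 0.

Variables (n m p : nat).

Definition obsmx (A : 'M[R]_n) (C : 'M[R]_(m, n)) (nu : nat) : 'M[R]_(nu * m, n) :=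
  \matrix_(i, j) (C *m A ^+ (i %/ m)%N) (mod_ord i) j.

Definition ctrbmx (A : 'M[R]_n) (B : 'M[R]_(n, p)) : 'M[R]_(n, n * p) :=
  \matrix_(i, j) (A ^+ (j %/ p)%N *m B) i (mod_ord j).

Definition controllable (A : 'M[R]_n) (B : 'M[R]_(n, p)) : Prop :=
  \rank (ctrbmx A B) = n.

Definition observable (A : 'M[R]_n) (C : 'M[R]_(m, n)) : Prop :=
  \rank (obsmx A C n) = n.

(* smallest nu with rank O_nu = n (searched in 0..n; for an observable pair
   this is the true minimum since rank O_n = n) *)
Definition mu_obs (A : 'M[R]_n) (C : 'M[R]_(m, n)) : nat :=
  find (fun nu => \rank (obsmx A C nu) == n) (iota 0 n.+1).

Definition toeplitzG (s : nat) (A : 'M[R]_n) (B : 'M[R]_(n, p)) (C : 'M[R]_(m, n))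
    (D : 'M[R]_(m, p)) : 'M[R]_(s * m, s * p) :=
  blockmx s s (fun i j => if (j < i)%N then C *m A ^+ (i - j - 1) *m B
                          else if i == j then D else 0).

Definition AF (A : 'M[R]_n) (B : 'M[R]_(n, p)) (F : 'M[R]_(p, n)) : 'M[R]_n :=
  A + B *m F.
Definition CF (C : 'M[R]_(m, n)) (D : 'M[R]_(m, p)) (F : 'M[R]_(p, n)) : 'M[R]_(m, n) :=
  C + D *m F.

(* M_k, N_k for k >= 0 (k < 0 handled in Ms / Ns) *)
Definition Mk A B F (k : nat) : 'M[R]_p :=
  if k is k'.+1 then F *m AF A B F ^+ k' *m B else 1%:M.
Definition Nk A B C D F (k : nat) : 'M[R]_(m, p) :=
  if k is k'.+1 then CF C D F *m AF A B F ^+ k' *m B else D.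

(* block (l,j) (0-based; same difference as 1-based) is M_{n+l-j} *)
Definition Ms s A B F : 'M[R]_(s * p, (s + n) * p) :=
  blockmx s (s + n) (fun l j => if (j <= n + l)%N then Mk A B F (n + l - j) else 0).
Definition Ns s A B C D F : 'M[R]_(s * m, (s + n) * p) :=
  blockmx s (s + n) (fun l j => if (j <= n + l)%N then Nk A B C D F (n + l - j) else 0).

Definition IG s A B C D F : 'M[R]_(s * p + s * m, (s + n) * p) :=
  col_mx (Ms s A B F) (Ns s A B C D F).

Definition Yhk A B F (L : 'M[R]_(n, m)) (k : nat) : 'M[R]_(p, m) :=
  if k is k'.+1 then F *m AF A B F ^+ k' *m L else 0.
Definition Xhk A B C D F (L : 'M[R]_(n, m)) (k : nat) : 'M[R]_m :=
  if k is k'.+1 then CF C D F *m AF A B F ^+ k' *m L else 1%:M.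

Definition Yhs s A B F L : 'M[R]_(s * p, (s + n) * m) :=
  blockmx s (s + n) (fun l j => if (j <= n + l)%N then Yhk A B F L (n + l - j) else 0).
Definition Xhs s A B C D F L : 'M[R]_(s * m, (s + n) * m) :=
  blockmx s (s + n) (fun l j => if (j <= n + l)%N then Xhk A B C D F L (n + l - j) else 0).

Definition IC s A B C D F L : 'M[R]_(s * p + s * m, (s + n) * m) :=
  col_mx (Yhs s A B F L) (Xhs s A B C D F L).

Definition Rmat (N : nat) (A : 'M[R]_n) (C : 'M[R]_(m, n)) (L : 'M[R]_(n, m)) :
    'M[R]_(N * m) :=
  blockmx N N (fun i j => if (j < i)%N then C *m A ^+ (i - j - 1) *m L
                          else if i == j then 1%:M else 0).

Definition sigs (N : nat) q (phi : int -> 'cV[R]_q) (k : int) : 'cV[R]_(N * q) :=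
  stackv N (fun i => phi (k + (i.+1)%:Z)).

Definition rbar (s : nat) A C L (r : int -> 'cV[R]_m) (k : int) : 'cV[R]_(s * m) :=
  dsubmx (castmx (mulnDl n s m, erefl 1%N)
            (Rmat (n + s) A C L *m sigs (n + s) r (k - n%:Z))).

End Defs.

From HB Require Import structures.
From mathcomp Require Import all_boot all_order all_algebra.
From mathcomp Require Import reals.
From mathcomp Require Import zify.
Set Implicit Arguments. Unset Strict Implicit. Unset Printing Implicit Defensive.
Import Order.TTheory GRing.Theory Num.Theory.
Local Open Scope ring_scope.

(* The block columns of I_{G,s}(F) and I_{C,s}(F,L) are input/output responses
   of the plant when u = F x plus an impulse, so that
     N_s = O_s X + T_{s,s} M_s   and   Xh_s = O_s X' + T_{s,s} Yh_s + [0 R_s],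
   where X, X' stack the impulse responses of the state under A + BF.
   Write K = [K_u K_y].  Restricted to the last s block columns, M_s is unit
   lower triangular and X vanishes, so K I_G = 0 forces K_u = - K_y T_{s,s};
   restricted to the first n block columns (in reverse order), X is the
   controllability matrix of (A + BF, B), whose left kernel is that of the
   controllability matrix of (A, B), so K_y O_s = 0.  Conversely, if
   K2 O_s = 0 then K2 [-T I] annihilates I_G and K2 [-T I] I_C = K2 [0 R_s]
   has the rank of K2 because R_s is invertible.  The same expansion of the
   stacked measured outputs gives the residual formula. *)

Lemma sum_ord_mul (V : nmodType) b c (G : nat -> 'I_c -> V) :
  \sum_(x < b * c) G (x %/ c)%N (mod_ord x) = \sum_(k < b) \sum_(z < c) G k z.
Proof.
case: c G => [|c] G.
  rewrite big1 => [|x]; last by have := ltn_ord x; rewrite {2}muln0.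
  by rewrite big1 // => k _; rewrite big_ord0.
pose H x := G (x %/ c.+1)%N (inord (x %% c.+1)).
transitivity (\sum_(x < b * c.+1) H x).
  by apply: eq_bigr => x _; congr G; apply: val_inj; rewrite /= inordK ?ltn_mod.
rewrite -(big_mkord xpredT H) big_nat_mul big_mkord; apply: eq_bigr => k _.
rewrite -{1}[(k * c.+1)%N]add0n big_addn mulSn addnK big_mkord.
apply: eq_bigr => z _; rewrite /H addnC divnMDl // divn_small // addn0.
by congr G; apply: val_inj; rewrite /= modnMDl modn_small // inordK.
Qed.

Section BlockMatrices.
Variable R : realType.

Definition bcolmx a r q (g : nat -> 'M[R]_(r, q)) : 'M[R]_(a * r, q) :=
  \matrix_(i, j) g (i %/ r)%N (mod_ord i) j.

Definition browmx b c q (g : nat -> 'M[R]_(q, c)) : 'M[R]_(q, b * c) :=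
  \matrix_(i, j) g (j %/ c)%N i (mod_ord j).

Lemma stackvE a r (g : nat -> 'cV[R]_r) : stackv a g = bcolmx a g.
Proof. by apply/matrixP => i j; rewrite !mxE ord1. Qed.

Lemma mulmx_blockmx a b d r c e (f : nat -> nat -> 'M[R]_(r, c))
    (g : nat -> nat -> 'M[R]_(c, e)) :
  blockmx a b f *m blockmx b d g =
  blockmx a d (fun i j => \sum_(k < b) f i k *m g k j).
Proof.
apply/matrixP => i j; rewrite !mxE summxE.
under [RHS]eq_bigr => k _ do rewrite mxE.
rewrite -(sum_ord_mul _ (fun k z =>
  f (i %/ r)%N k (mod_ord i) z * g k (j %/ e)%N z (mod_ord j))).
by apply: eq_bigr => x _; rewrite !mxE.
Qed.

Lemma mul_blockmx_bcolmx a b r c q (f : nat -> nat -> 'M[R]_(r, c))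
    (g : nat -> 'M[R]_(c, q)) :
  blockmx a b f *m bcolmx b g = bcolmx a (fun i => \sum_(k < b) f i k *m g k).
Proof.
apply/matrixP => i j; rewrite !mxE summxE.
under [RHS]eq_bigr => k _ do rewrite mxE.
rewrite -(sum_ord_mul _ (fun k z => f (i %/ r)%N k (mod_ord i) z * g k z j)).
by apply: eq_bigr => x _; rewrite !mxE.
Qed.

Lemma mul_browmx_blockmx b d q c e (g : nat -> 'M[R]_(q, c))
    (f : nat -> nat -> 'M[R]_(c, e)) :
  browmx b g *m blockmx b d f = browmx d (fun j => \sum_(k < b) g k *m f k j).
Proof.
apply/matrixP => i j; rewrite !mxE summxE.
under [RHS]eq_bigr => k _ do rewrite mxE.
rewrite -(sum_ord_mul _ (fun k z => g k i z * f k (j %/ e)%N z (mod_ord j))).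
by apply: eq_bigr => x _; rewrite !mxE.
Qed.

Lemma mul_bcolmx_browmx a b r q c (g : nat -> 'M[R]_(r, q))
    (h : nat -> 'M[R]_(q, c)) :
  bcolmx a g *m browmx b h = blockmx a b (fun i j => g i *m h j).
Proof. by apply/matrixP => i j; rewrite !mxE; apply: eq_bigr => k _; rewrite !mxE. Qed.

Lemma mulmx_browmx b c q q' (v : 'M[R]_(q', q)) (g : nat -> 'M[R]_(q, c)) :
  v *m browmx b g = browmx b (fun k => v *m g k).
Proof. by apply/matrixP => i j; rewrite !mxE; apply: eq_bigr => k _; rewrite !mxE. Qed.

Lemma mulmx_bcolmx a r q q' (g : nat -> 'M[R]_(r, q)) (x : 'M[R]_(q, q')) :
  bcolmx a g *m x = bcolmx a (fun i => g i *m x).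
Proof. by apply/matrixP => i j; rewrite !mxE; apply: eq_bigr => k _; rewrite !mxE. Qed.

Lemma add_blockmx a b r c (f g : nat -> nat -> 'M[R]_(r, c)) :
  blockmx a b f + blockmx a b g = blockmx a b (fun i j => f i j + g i j).
Proof. by apply/matrixP => i j; rewrite !mxE. Qed.

Lemma add_bcolmx a r q (f g : nat -> 'M[R]_(r, q)) :
  bcolmx a f + bcolmx a g = bcolmx a (fun i => f i + g i).
Proof. by apply/matrixP => i j; rewrite !mxE. Qed.

Lemma browmx0 b c q : browmx b (fun _ => 0 : 'M[R]_(q, c)) = 0.
Proof. by apply/matrixP => i j; rewrite !mxE. Qed.

Lemma ltn_div_ord a r (i : 'I_(a * r)) : (i %/ r < a)%N.
Proof. by rewrite ltn_divLR ?ltn_ord //; case: r i => [|r] [i /=]; rewrite ?muln0. Qed.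

Lemma eq_blockmx a b r c (f g : nat -> nat -> 'M[R]_(r, c)) :
  (forall i j, (i < a)%N -> (j < b)%N -> f i j = g i j) ->
  blockmx a b f = blockmx a b g.
Proof. by move=> fg; apply/matrixP => i j; rewrite !mxE fg // ltn_div_ord. Qed.

Lemma eq_bcolmx a r q (f g : nat -> 'M[R]_(r, q)) :
  (forall i, (i < a)%N -> f i = g i) -> bcolmx a f = bcolmx a g.
Proof. by move=> fg; apply/matrixP => i j; rewrite !mxE fg // ltn_div_ord. Qed.

Lemma eq_browmx b c q (f g : nat -> 'M[R]_(q, c)) :
  (forall i, (i < b)%N -> f i = g i) -> browmx b f = browmx b g.
Proof. by move=> fg; apply/matrixP => i j; rewrite !mxE fg // ltn_div_ord. Qed.

Lemma browmx_eq0 b c q (g : nat -> 'M[R]_(q, c)) :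
  browmx b g = 0 -> forall k, (k < b)%N -> g k = 0.
Proof.
move=> g0 k kb; apply/matrixP => i z.
have kz_lt : (k * c + z < b * c)%N by have := ltn_ord z; nia.
have := congr1 (fun M : 'M[R]_(q, b * c) => M i (Ordinal kz_lt)) g0; rewrite !mxE /=.
have c_gt0 : (0 < c)%N by apply: leq_ltn_trans (ltn_ord z).
rewrite divnMDl // divn_small // addn0 => <-; congr (g k i _).
by apply: val_inj; rewrite /= modnMDl modn_small.
Qed.

Lemma dsubmx_bcolmx a b r q (g : nat -> 'M[R]_(r, q)) :
  dsubmx (castmx (mulnDl a b r, erefl q) (bcolmx (a + b) g)) =
  bcolmx b (fun i => g (a + i)%N).
Proof.
apply/matrixP => i j; rewrite !mxE castmxE /= !mxE.
have r_gt0 : (0 < r)%N by case: (posnP r) i => [->|//] [i /=]; rewrite muln0.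
by congr (g _ _ _); [rewrite /= divnMDl | apply: val_inj; rewrite /= modnMDl |
  apply: val_inj].
Qed.

Definition selmx b c q (f : nat -> nat) : 'M[R]_(b * q, c * q) :=
  blockmx b c (fun j l => if j == f l then 1%:M else 0).

Lemma sum_mul_indicator b r q (g : nat -> 'M[R]_(r, q)) j : (j < b)%N ->
  \sum_(k < b) g k *m (if (k : nat) == j then 1%:M else 0) = g j.
Proof.
move=> jb; under eq_bigr do rewrite (fun_if (mulmx _)) mulmx1 mulmx0.
by rewrite -big_mkcond big_ord1_eq jb.
Qed.

Lemma mul_blockmx_selmx a b c r q (g : nat -> nat -> 'M[R]_(r, q)) (f : nat -> nat) :
  (forall l, (l < c)%N -> (f l < b)%N) ->
  blockmx a b g *m selmx b c q f = blockmx a c (fun i l => g i (f l)).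
Proof.
move=> fb; rewrite mulmx_blockmx; apply: eq_blockmx => i l _ lc.
exact: sum_mul_indicator (fb _ lc).
Qed.

Lemma mul_browmx_selmx b c r q (g : nat -> 'M[R]_(r, q)) (f : nat -> nat) :
  (forall l, (l < c)%N -> (f l < b)%N) ->
  browmx b g *m selmx b c q f = browmx c (fun l => g (f l)).
Proof.
move=> fb; rewrite mul_browmx_blockmx; apply: eq_browmx => l lc.
exact: sum_mul_indicator (fb _ lc).
Qed.

Lemma blockmx_unitmx a r (f : nat -> nat -> 'M[R]_r) :
  (forall i, (i < a)%N -> f i i = 1%:M) ->
  (forall i j, (i < j < a)%N -> f i j = 0) -> blockmx a a f \in unitmx.
Proof.
move=> f_diag f_upper; rewrite unitmxE det_trig.
  by rewrite big1 ?unitr1 // => i _; rewrite mxE f_diag ?ltn_div_ord // mxE eqxx.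
apply/is_trig_mxP => i j ij; rewrite mxE.
have := leq_div2r r (ltnW ij); rewrite leq_eqVlt => /orP[/eqP e|lt]; last first.
  by rewrite f_upper ?lt ?ltn_div_ord // mxE.
rewrite e f_diag ?ltn_div_ord // mxE; case: eqP => // /(congr1 val) /= em.
by move: ij; rewrite (divn_eq i r) (divn_eq j r) e em ltnn.
Qed.

End BlockMatrices.

Arguments selmx {R} b c q f.

Section LowerToeplitz.
Variables (R : realType) (r c : nat) (f : nat -> 'M[R]_(r, c)) (d : 'M[R]_(r, c)).

Definition toeplitz_blk (i j : nat) : 'M[R]_(r, c) :=
  if (j < i)%N then f (i - j - 1) else if i == j then d else 0.

Lemma sum_toeplitz_blk q s l (v : nat -> 'M[R]_(c, q)) : (l < s)%N ->
  \sum_(k < s) toeplitz_blk l k *m v k = \sum_(k < l) f (l - k - 1) *m v k + d *m v l.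
Proof.
move=> ls; rewrite -(big_mkord xpredT (fun k => toeplitz_blk l k *m v k)).
rewrite -(big_mkord xpredT (fun k => f (l - k - 1) *m v k)).
rewrite (@big_cat_nat _ _ _ l) ?(ltnW ls) //= [X in _ + X]big_ltn //.
rewrite [X in _ + (_ + X)]big1_seq => [|k]; last first.
  move=> /andP[_]; rewrite mem_index_iota => /andP[lk _].
  by rewrite /toeplitz_blk ltnNge (ltnW lk) (ltn_eqF lk) mul0mx.
rewrite /toeplitz_blk ltnn eqxx addr0; congr (_ + _).
by apply: eq_big_nat => k /andP[_ kl]; rewrite kl.
Qed.

End LowerToeplitz.

Lemma toeplitzGE (R : realType) n m p s (A : 'M[R]_n) (B : 'M[R]_(n, p))
    (C : 'M[R]_(m, n)) (D : 'M[R]_(m, p)) :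
  toeplitzG s A B C D = blockmx s s (toeplitz_blk (fun k => C *m A ^+ k *m B) D).
Proof. by []. Qed.

Lemma RmatE (R : realType) n m N (A : 'M[R]_n) (C : 'M[R]_(m, n)) L :
  Rmat N A C L = blockmx N N (toeplitz_blk (fun k => C *m A ^+ k *m L) 1%:M).
Proof. by []. Qed.

Section StateSpace.
Variables (R : realType) (n m p : nat).
Variables (A : 'M[R]_n) (B : 'M[R]_(n, p)) (C : 'M[R]_(m, n)) (D : 'M[R]_(m, p))
  (L : 'M[R]_(n, m)).

Lemma state_expansion q (x : nat -> 'M[R]_(n, q)) (u : nat -> 'M[R]_(p, q))
    (w : nat -> 'M[R]_(m, q)) N :
  (forall t, (t < N)%N -> x t.+1 = A *m x t + B *m u t + L *m w t) ->
  x N = A ^+ N *m x 0%N + \sum_(k < N) A ^+ (N - k - 1) *m (B *m u k + L *m w k).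
Proof.
elim: N => [|N IH] xS; first by rewrite expr0 mul1mx big_ord0 addr0.
rewrite xS // IH => [|t tN]; last by apply: xS; apply: ltnW.
have expS k : A ^+ k.+1 = A *m A ^+ k := exprS A k.
rewrite big_ord_recr /= subSnn subnn expr0 mul1mx mulmxDr mulmxA -expS.
rewrite mulmx_sumr -!addrA; congr (_ + (_ + _)); apply: eq_bigr => k _.
by rewrite mulmxA -expS; congr (A ^+ _ *m _); have := ltn_ord k; lia.
Qed.

Lemma output_expansion q s (x : nat -> 'M[R]_(n, q)) (u : nat -> 'M[R]_(p, q))
    (w : nat -> 'M[R]_(m, q)) l :
  (l < s)%N ->
  (forall t, (t < l)%N -> x t.+1 = A *m x t + B *m u t + L *m w t) ->
  C *m x l + D *m u l + w l =
  C *m A ^+ l *m x 0%N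
  + \sum_(k < s) toeplitz_blk (fun i => C *m A ^+ i *m B) D l k *m u k
  + \sum_(k < s) toeplitz_blk (fun i => C *m A ^+ i *m L) 1%:M l k *m w k.
Proof.
move=> ls xS; rewrite (state_expansion xS) !sum_toeplitz_blk // mul1mx.
rewrite mulmxDr mulmxA mulmx_sumr -!addrA; congr (_ + _).
under eq_bigr do rewrite !mulmxDr !mulmxA.
by rewrite big_split /= -!addrA; congr (_ + _); rewrite addrCA.
Qed.

End StateSpace.

Section StateFeedback.
Variables (R : realType) (n p : nat).
Variables (A : 'M[R]_n) (B : 'M[R]_(n, p)) (F : 'M[R]_(p, n)).

(* M_k, N_k, Yh_k and Xh_k are markov F B 1, markov C_F B D, markov F L 0 and
   markov C_F L 1. *)
Definition markov r q (P : 'M[R]_(r, n)) (G : 'M[R]_(n, q)) (E : 'M[R]_(r, q)) k :=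
  if k is k'.+1 then P *m AF A B F ^+ k' *m G else E.

Definition impulse_state q (G : 'M[R]_(n, q)) (j i : nat) : 'M[R]_(n, q) :=
  if (j < i)%N then AF A B F ^+ (i - 1 - j) *m G else 0.

Definition impulse_states N q (G : 'M[R]_(n, q)) : 'M[R]_(n, N * q) :=
  browmx N (fun j => impulse_state G j n).

Lemma impulse_stateS q (G : 'M[R]_(n, q)) j i :
  impulse_state G j i.+1 =
  A *m impulse_state G j i + B *m (F *m impulse_state G j i)
  + (if j == i then G else 0).
Proof.
rewrite mulmxA -mulmxDl -/(AF A B F) /impulse_state ltnS subSS subn0.
case: ltngtP => [ji|ij|<-]; last by rewrite subnn expr0 mul1mx mulmx0 add0r.
  by rewrite -subnDA add1n -(subnSK ji) exprS mulmxA addr0.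
by rewrite mulmx0 addr0.
Qed.

Lemma markov_blk r q (P : 'M[R]_(r, n)) (G : 'M[R]_(n, q)) (E : 'M[R]_(r, q)) j i :
  (if (j <= i)%N then markov P G E (i - j) else 0) =
  P *m impulse_state G j i + (if j == i then E else 0).
Proof.
rewrite /impulse_state; case: ltngtP => [ji|ij|<-].
- by rewrite -subnDA add1n -(subnSK ji) mulmxA addr0.
- by rewrite mulmx0 addr0.
- by rewrite subnn mulmx0 add0r.
Qed.

Lemma ctrbmx_feedback k (v : 'M[R]_(k, n)) :
  v *m ctrbmx (AF A B F) B = 0 -> v *m ctrbmx A B = 0.
Proof.
have ctrbmxE M : ctrbmx M B = browmx n (fun k => M ^+ k *m B) by [].
rewrite !ctrbmxE !mulmx_browmx => /browmx_eq0 vAFB0.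
have vAF_vA j : (j < n)%N -> v *m AF A B F ^+ j = v *m A ^+ j.
  elim: j => [|j IH] jn; first by rewrite !expr0.
  have jn' := ltnW jn.
  have vAjB0 : v *m A ^+ j *m B = 0 by rewrite -IH // -mulmxA vAFB0.
  by rewrite !exprSr !mulmxA IH // /AF mulmxDr mulmxA vAjB0 mul0mx addr0.
rewrite -(@browmx0 R n p k); apply: eq_browmx => j jn.
by rewrite mulmxA -vAF_vA // -mulmxA vAFB0.
Qed.
End StateFeedback.

Section Decomposition.
Variables (R : realType) (n m p s : nat).
Variables (A : 'M[R]_n) (B : 'M[R]_(n, p)) (C : 'M[R]_(m, n)) (D : 'M[R]_(m, p))
  (F : 'M[R]_(p, n)).

Lemma obsmxE N : obsmx A C N = bcolmx N (fun l => C *m A ^+ l).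
Proof. by []. Qed.

Lemma Ns_decomposition :
  Ns s A B C D F = obsmx A C s *m impulse_states A B F (s + n) B
                   + toeplitzG s A B C D *m Ms s A B F.
Proof.
rewrite obsmxE /impulse_states mul_bcolmx_browmx toeplitzGE /Ms mulmx_blockmx.
rewrite add_blockmx /Ns.
apply: eq_blockmx => l j ls _.
pose x t := impulse_state A B F B j (n + t).
pose u t := if (j <= n + t)%N then Mk A B F (n + t - j) else 0.
have u_x t : u t = F *m x t + (if j == (n + t)%N then 1%:M else 0) :=
  markov_blk A B F F B 1%:M j (n + t).
have xS t : (t < l)%N -> x t.+1 = A *m x t + B *m u t + (0 : 'M[R]_(n, m)) *m 0.
  move=> _; rewrite /x addnS impulse_stateS u_x mulmx0 addr0 mulmxDr -addrA.
  by rewrite (fun_if (mulmx B)) mulmx1 mulmx0.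
transitivity (C *m x l + D *m u l + 0).
  rewrite (markov_blk A B F (CF C D F) B D j (n + l)) u_x addr0 /CF.
  by rewrite mulmxDl mulmxDr mulmxA -addrA (fun_if (mulmx D)) mulmx1 mulmx0.
rewrite (output_expansion C D ls xS) [X in _ + X]big1 => [|k _]; last by rewrite mulmx0.
by rewrite addr0 /x addn0.
Qed.

Variable L : 'M[R]_(n, m).

Definition Rmat_padl : 'M[R]_(s * m, (s + n) * m) :=
  blockmx s (s + n) (fun l j =>
    if (n <= j)%N then toeplitz_blk (fun k => C *m A ^+ k *m L) 1%:M l (j - n) else 0).

Lemma Xhs_decomposition :
  Xhs s A B C D F L =
  obsmx A C s *m impulse_states A B F (s + n) L + toeplitzG s A B C D *m Yhs s A B F L
  + Rmat_padl.
Proof.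
rewrite obsmxE /impulse_states mul_bcolmx_browmx toeplitzGE /Yhs mulmx_blockmx.
rewrite /Rmat_padl !add_blockmx /Xhs.
apply: eq_blockmx => l j ls js.
pose x t := impulse_state A B F L j (n + t).
pose u t := if (j <= n + t)%N then Yhk A B F L (n + t - j) else 0.
pose w t : 'M[R]_m := if j == (n + t)%N then 1%:M else 0.
have u_x t : u t = F *m x t.
  by rewrite [LHS](markov_blk A B F F L 0 j (n + t)) if_same addr0.
have xS t : (t < l)%N -> x t.+1 = A *m x t + B *m u t + L *m w t.
  by move=> _; rewrite /x addnS impulse_stateS u_x (fun_if (mulmx L)) mulmx1 mulmx0.
have sum_w : \sum_(k < s) toeplitz_blk (fun k => C *m A ^+ k *m L) 1%:M l k *m w k =
    if (n <= j)%N then toeplitz_blk (fun k => C *m A ^+ k *m L) 1%:M l (j - n) else 0.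
  under eq_bigr do rewrite (fun_if (mulmx _)) mulmx1 mulmx0.
  rewrite -big_mkcond; case: leqP => nj.
    rewrite (eq_bigl (fun k : 'I_s => (k : nat) == (j - n)%N)) ?big_ord1_eq ?ifT //.
      by rewrite ltn_subLR // addnC.
    by move=> k; apply/eqP/eqP; lia.
  by rewrite big_pred0 // => k; apply/eqP; lia.
transitivity (C *m x l + D *m u l + w l).
  rewrite (markov_blk A B F (CF C D F) L 1%:M j (n + l)) u_x /CF.
  by rewrite mulmxDl mulmxA.
by rewrite (output_expansion C D ls xS) sum_w /x addn0.
Qed.
End Decomposition.

Section Residual.
Variables (R : realType) (n m p s : nat).
Variables (A : 'M[R]_n) (B : 'M[R]_(n, p)) (C : 'M[R]_(m, n)) (D : 'M[R]_(m, p))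
  (L : 'M[R]_(n, m)).

Lemma sigsE N q (phi : int -> 'cV[R]_q) k :
  sigs N phi k = bcolmx N (fun i => phi (k + i.+1%:Z)).
Proof. exact: stackvE. Qed.

Lemma stacked_outputs (u : int -> 'cV[R]_p) (y r : int -> 'cV[R]_m)
    (xh : int -> 'cV[R]_n) k :
  (forall j, k + 1 <= j <= k + s%:Z -> y j = C *m xh j + D *m u j + r j) ->
  (forall j, k + 1 <= j < k + s%:Z -> xh (j + 1) = A *m xh j + B *m u j + L *m r j) ->
  sigs s y k = obsmx A C s *m xh (k + 1) + toeplitzG s A B C D *m sigs s u k
               + Rmat s A C L *m sigs s r k.
Proof.
move=> y_eq xh_eq; rewrite !sigsE toeplitzGE RmatE !mul_blockmx_bcolmx obsmxE.
rewrite mulmx_bcolmx !add_bcolmx; apply: eq_bcolmx => l ls.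
rewrite y_eq; last lia.
apply: (output_expansion C D ls (x := fun t => xh (k + t.+1%:Z))
  (u := fun t => u (k + t.+1%:Z)) (w := fun t => r (k + t.+1%:Z))) => t tl.
have -> : k + t.+2%:Z = k + t.+1%:Z + 1 by lia.
apply: xh_eq; lia.
Qed.

Lemma rbar_expansion (r : int -> 'cV[R]_m) k :
  rbar s A C L r k =
  obsmx A C s *m (\sum_(j < n) A ^+ (n - 1 - j) *m L *m r (k - n%:Z + j.+1%:Z))
  + Rmat s A C L *m sigs s r k.
Proof.
rewrite /rbar !sigsE !RmatE !mul_blockmx_bcolmx dsubmx_bcolmx obsmxE mulmx_bcolmx.
rewrite add_bcolmx; apply: eq_bcolmx => l ls.
rewrite big_split_ord /=; congr (_ + _).
  rewrite mulmx_sumr; apply: eq_bigr => j _ /=.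
  have jn := ltn_ord j.
  rewrite /toeplitz_blk ifT; last lia.
  have -> : (n + l - j - 1 = l + (n - 1 - j))%N by lia.
  by rewrite exprD !mulmxA.
apply: eq_bigr => j _ /=.
have -> : k - n%:Z + (n + j).+1%:Z = k + j.+1%:Z by lia.
by rewrite /toeplitz_blk ltn_add2l eqn_add2l subnDl.
Qed.

End Residual.

Section KernelCharacterization.
Variables (R : realType) (n m p s q : nat).
Variables (A : 'M[R]_n) (B : 'M[R]_(n, p)) (C : 'M[R]_(m, n)) (D : 'M[R]_(m, p))
  (F : 'M[R]_(p, n)) (L : 'M[R]_(n, m)).

Local Notation T := (toeplitzG s A B C D).
Local Notation O := (obsmx A C s).

Lemma mul_row_toeplitz_col c (K2 : 'M[R]_(q, s * m)) (X : 'M[R]_(s * p, c))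
    (Y : 'M[R]_(s * m, c)) :
  K2 *m row_mx (- T) 1%:M *m col_mx X Y = K2 *m (Y - T *m X).
Proof. by rewrite -mulmxA mul_row_col mul1mx mulNmx addrC. Qed.

Lemma Ms_tail_unitmx : Ms s A B F *m selmx (s + n) s p (addn n) \in unitmx.
Proof.
rewrite mul_blockmx_selmx => [|l ls]; last by rewrite addnC ltn_add2r.
apply: blockmx_unitmx => [i _|i j /andP[ij _]]; first by rewrite leqnn subnn.
by rewrite leq_add2l leqNgt ij.
Qed.

Lemma impulse_states_tail c (G : 'M[R]_(n, c)) :
  impulse_states A B F (s + n) G *m selmx (s + n) s c (addn n) = 0.
Proof.
rewrite /impulse_states mul_browmx_selmx => [|l ls]; last by rewrite addnC ltn_add2r.
rewrite -(@browmx0 R s c n); apply: eq_browmx => l _.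
by rewrite /impulse_state ltnNge leq_addr.
Qed.

Lemma impulse_states_head :
  impulse_states A B F (s + n) B *m selmx (s + n) n p (fun i => n - 1 - i)%N =
  ctrbmx (AF A B F) B.
Proof.
rewrite /impulse_states mul_browmx_selmx => [|i ni]; last lia.
transitivity (browmx n (fun i => AF A B F ^+ i *m B)); last by [].
apply: eq_browmx => i ni; rewrite /impulse_state ifT; last lia.
by have -> : (n - 1 - (n - 1 - i) = i)%N by lia.
Qed.

Lemma Rmat_unitmx : Rmat s A C L \in unitmx.
Proof.
apply: blockmx_unitmx => [i _|i j /andP[ij _]]; rewrite /toeplitz_blk.
  by rewrite ltnn eqxx.
by rewrite ltnNge (ltnW ij) (ltn_eqF ij).
Qed.

Lemma Rmat_padl_tail : Rmat_padl s A C L *m selmx (s + n) s m (addn n) = Rmat s A C L.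
Proof.
rewrite /Rmat_padl mul_blockmx_selmx => [|l ls]; last by rewrite addnC ltn_add2r.
by apply: eq_blockmx => i l _ _; rewrite leq_addr addKn.
Qed.

Lemma IG_kernel_factor (K : 'M[R]_(q, s * p + s * m)) :
  controllable A B -> K *m IG s A B C D F = 0 ->
  K = rsubmx K *m row_mx (- T) 1%:M /\ rsubmx K *m O = 0.
Proof.
move=> ctrb; rewrite -{1 2}(hsubmxK K) /IG mul_row_col Ns_decomposition.
set Ku := lsubmx K; set Ky := rsubmx K; set X := impulse_states _ _ _ _ _ => KIG0.
have {}KIG0 : (Ku + Ky *m T) *m Ms s A B F + Ky *m O *m X = 0.
  by rewrite -KIG0 mulmxDr mulmxDl !mulmxA addrAC -addrA.
have Ku_eq : Ku + Ky *m T = 0.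
  have Ms_free : row_free (Ms s A B F *m selmx (s + n) s p (addn n)).
    by rewrite row_free_unit Ms_tail_unitmx.
  apply: (row_free_inj Ms_free); rewrite mul0mx.
  have := congr1 (mulmx^~ (selmx (s + n) s p (addn n))) KIG0.
  by rewrite /= mulmxDl -!mulmxA impulse_states_tail !mulmx0 addr0 mul0mx.
have KyO : Ky *m O = 0.
  apply: (row_free_inj (A := ctrbmx A B)); first by rewrite /row_free ctrb.
  rewrite mul0mx; apply: (ctrbmx_feedback (F := F)).
  have := congr1 (mulmx^~ (selmx (s + n) n p (fun i => n - 1 - i)%N)) KIG0.
  by rewrite /= Ku_eq !mul0mx add0r -mulmxA impulse_states_head.
split=> //; rewrite mul_mx_row mulmxN mulmx1; congr row_mx.
by apply/eqP; rewrite -addr_eq0 Ku_eq.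
Qed.

Lemma IG_annihilated (K2 : 'M[R]_(q, s * m)) :
  K2 *m O = 0 -> K2 *m row_mx (- T) 1%:M *m IG s A B C D F = 0.
Proof.
move=> K2O; rewrite /IG mul_row_toeplitz_col Ns_decomposition addrK.
by rewrite mulmxA K2O mul0mx.
Qed.

Lemma rank_IC_annihilated (K2 : 'M[R]_(q, s * m)) :
  K2 *m O = 0 -> \rank (K2 *m row_mx (- T) 1%:M *m IC s A B C D F L) = \rank K2.
Proof.
move=> K2O; rewrite /IC mul_row_toeplitz_col Xhs_decomposition addrAC addrK.
rewrite mulmxDr mulmxA K2O mul0mx add0r; apply/eqP; rewrite eqn_leq mxrankM_maxl /=.
have Rmat_free : row_free (Rmat s A C L) by rewrite row_free_unit Rmat_unitmx.
by rewrite -{1}(mxrankMfree K2 Rmat_free) -Rmat_padl_tail mulmxA mxrankM_maxl.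
Qed.

Lemma residual_eq (K2 : 'M[R]_(q, s * m)) (u : int -> 'cV[R]_p)
    (y r : int -> 'cV[R]_m) (xh : int -> 'cV[R]_n) k :
  K2 *m O = 0 ->
  (forall j, k + 1 <= j <= k + s%:Z -> y j = C *m xh j + D *m u j + r j) ->
  (forall j, k + 1 <= j < k + s%:Z -> xh (j + 1) = A *m xh j + B *m u j + L *m r j) ->
  K2 *m row_mx (- T) 1%:M *m col_mx (sigs s u k) (sigs s y k) = K2 *m rbar s A C L r k.
Proof.
move=> K2O y_eq xh_eq; rewrite mul_row_toeplitz_col (stacked_outputs y_eq xh_eq).
by rewrite rbar_expansion addrAC addrK !mulmxDr !mulmxA K2O !mul0mx !add0r.
Qed.

End KernelCharacterization.

(* Observability and s > mu_obs only guarantee that the parity matrices K2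
   exist; neither the characterization nor the residual formula needs them. *)
Theorem theorem4 (R : realType) (n m p s : nat)
    (A : 'M[R]_n) (B : 'M[R]_(n, p)) (C : 'M[R]_(m, n)) (D : 'M[R]_(m, p))
    (F : 'M[R]_(p, n)) (L : 'M[R]_(n, m))
    (K : 'M[R]_(s * m - n, s * p + s * m)) :
  (1 <= n)%N -> controllable A B -> observable A C -> (mu_obs A C < s)%N ->
  ((K *m IG s A B C D F = 0 /\ \rank (K *m IC s A B C D F L) = (s * m - n)%N)
    <-> exists K2 : 'M[R]_(s * m - n, s * m),
      [/\ K = K2 *m row_mx (- toeplitzG s A B C D) 1%:M,
          K2 *m obsmx A C s = 0 & \rank K2 = (s * m - n)%N])
  /\
  (forall K2 : 'M[R]_(s * m - n, s * m),
      K = K2 *m row_mx (- toeplitzG s A B C D) 1%:M ->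
      K2 *m obsmx A C s = 0 -> \rank K2 = (s * m - n)%N ->
      forall (u : int -> 'cV[R]_p) (y r : int -> 'cV[R]_m) (xh : int -> 'cV[R]_n)
             (k : int),
      (forall j : int, k - n%:Z + 1 <= j <= k + s%:Z ->
         y j = C *m xh j + D *m u j + r j) ->
      (forall j : int, k - n%:Z + 1 <= j < k + s%:Z ->
         xh (j + 1) = A *m xh j + B *m u j + L *m r j) ->
      K *m col_mx (sigs s u k) (sigs s y k) = K2 *m rbar s A C L r k).
Proof.
move=> _ ctrb _ _; split.
  split=> [[KIG0 rank_KIC] | [K2 [-> K2O rank_K2]]].
    have [eK KyO] := IG_kernel_factor ctrb KIG0.
    by exists (rsubmx K); split; rewrite // -(rank_IC_annihilated B D F L KyO) -eK.
  by split; [exact: IG_annihilated | rewrite rank_IC_annihilated].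
move=> K2 -> K2O _ u y r xh k y_eq xh_eq.
by apply: residual_eq => // j /andP[j1 j2]; [apply: y_eq | apply: xh_eq]; lia.
Qed.
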